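(* Let $\mu$ be a measure on $\mathbb R$ with infinite support and finite moments $m_k(\mu)=\int t^k\,d\mu(t)$, $k\ge0$. Let $a_n\in\mathbb R_{>0}$ and $b_n\in\mathbb R$ ($n\ge1$) be such that the $n$-th approximant $w_n(z)$ of the continued fraction $\cfrac{a_1}{z+b_1-\cfrac{a_2}{z+b_2-\cfrac{a_3}{z+b_3-\cdots}}}$ satisfies $w_n(z)-\sum_{k=0}^{2n-1}\frac{m_k(\mu)}{z^{k+1}}=o(z^{-2n})$ $(z\to\infty)$ for every $n\ge1$. Let $f(z)$ be a complex-valued function defined on an unbounded subset $\mathfrak X$ of $\mathbb C\cup\{\infty\}$. Then the following are equivalent: (i) $f(z)\sim\sum_{k=0}^\infty\frac{m_k(\mu)}{z^{k+1}}$ $(z\to\infty)_{\mathfrak X}$; (ii) $f(z)\sim\cfrac{a_1}{z+b_1-\cfrac{a_2}{z+b_2-\cfrac{a_3}{z+b_3-\cdots}}}$ $(z\to\infty)_{\mathfrak X}$; (iii) for every $n\ge1$, $f(z)=\cfrac{a_1}{z+b_1-\cfrac{a_2}{\ddots-\cfrac{a_n}{z+b_n-f_n(z)}}}$ for some $f_n$ with $f_n(z)\sim\frac{a_{n+1}}{z}$ $(z\to\infty)_{\mathfrak X}$; (iv) $f(z)-w_n(z)\sim\frac{a_1\cdots a_{n+1}}{z^{2n+1}}$ $(z\to\infty)_{\mathfrak X}$ for all $n\ge0$; (v) $f(z)-w_n(z)=O(z^{-(2n+1)})$ $(z\to\infty)_{\mathfrak X}$ for all $n\ge0$; (vi) $f(z)-w_n(z)=O(z^{-(2n+1)})$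 $(z\to\infty)_{\mathfrak X}$ for infinitely many $n\ge0$; (vii) for every $n\ge0$, $w_n$ is the unique rational function of degree at most $n$ with $f(z)-w(z)=O(z^{-(2n+1)})$ $(z\to\infty)_{\mathfrak X}$; (viii) for every $n\ge1$, $w_n$ is the unique Padé approximant of $f$ over $\mathfrak X$ at $\infty$ of order $[n-1,n]$. In particular, for all $\delta,\varepsilon>0$ the Stieltjes transform $\mathcal S_\mu(z)=\int\frac{d\mu(t)}{z-t}$ satisfies $\mathcal S_\mu(z)\sim\cfrac{a_1}{z+b_1-\cfrac{a_2}{z+b_2-\cdots}}$ $(z\to\infty)_{\mathbb C_{\delta,\varepsilon}}$ over $\mathbb C_{\delta,\varepsilon}=\{z\in\mathbb C:\delta\le|\operatorname{Arg}(z)|\le\pi-\varepsilon\}$.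
   Context: Known fact (Stieltjes/Jacobi theory): for such $\mu$ sequences $a_n>0$, $b_n\in\mathbb R$ as described exist. Asymptotic relations as $z\to\infty$ within $\mathfrak X$: $O$, $o$, $\sim$ on punctured neighbourhoods of $\infty$ intersected with $\mathfrak X$. $f\sim\sum_k c_k/z^{k+1}$ means $f-\sum_{k=0}^n c_k/z^{k+1}=o(z^{-(n+1)})$ for all $n$. For a continued fraction with approximants $v_m$ ($v_0=0$), $f\sim K$ means $\{v_m-v_{m-1}\}_{m\ge1}$ is an asymptotic sequence and $f-v_m=O(v_{m+1}-v_m)$ for all $m\ge0$. Degree of a rational function: max of degrees of numerator and denominator in lowest terms. Padé approximant of order $[n-1,n]$ at $\infty$: the unique $g/h$, $\deg g\le n-1$, $0\ne h$, $\deg h\le n$, with $f-g/h=O(z^{-(2n+1)})$ $(z\to\infty)_{\mathfrak X}$. *)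

From HB Require Import structures.
From mathcomp Require Import all_boot all_order all_algebra.
From mathcomp Require Import all_classical all_reals all_analysis.
From mathcomp Require Import complex.
Set Implicit Arguments. Unset Strict Implicit. Unset Printing Implicit Defensive.
Import Order.TTheory GRing.Theory Num.Theory.
Local Open Scope classical_set_scope.
Local Open Scope ring_scope.
Local Open Scope complex_scope.

Section Defs.
Variable R : realType.
Local Notation C := R[i].

Definition unbounded (X : set C) : Prop :=
  forall r : R, exists2 z, X z & r%:C < `|z|.

Definition bigO_at_oo (X : set C) (f g : C -> C) : Prop :=
  exists M : R, exists r : R,
    forall z, X z -> r%:C < `|z| -> `|f z| <= M%:C * `|g z|.

Definition littleo_at_oo (X : set C) (f g : C -> C) : Prop :=
  forall eps : R, 0 < eps -> exists r : R,
    forall z, X z -> r%:C < `|z| -> `|f z| <= eps%:C * `|g z|.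

Definition asym_equiv (X : set C) (f g : C -> C) : Prop :=
  littleo_at_oo X (fun z => f z - g z) g.

Definition asym_expansion (X : set C) (f : C -> C) (c : nat -> C) : Prop :=
  forall n : nat,
    littleo_at_oo X (fun z => f z - \sum_(0 <= k < n.+1) c k / z ^+ k.+1)
                    (fun z => (z ^+ n.+1)^-1).

Definition asym_sequence (X : set C) (phi : nat -> C -> C) : Prop :=
  forall m : nat, (0 < m)%N -> littleo_at_oo X (phi m.+1) (phi m).

(* f ~ K (z -> oo)_X for a continued fraction K with approximants v_m, v_0 = 0 *)
Definition cf_asymp (X : set C) (f : C -> C) (v : nat -> C -> C) : Prop :=
  asym_sequence X (fun m z => v m z - v m.-1 z) /\
  forall m : nat, bigO_at_oo X (fun z => f z - v m z)
                               (fun z => v m.+1 z - v m z).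

(* cf_nest a b n z u = a_1/(z+b_1 - a_2/(z+b_2 - ... a_n/(z+b_n - u))) *)
Fixpoint cf_nest (a b : nat -> R) (n : nat) (z u : C) : C :=
  match n with
  | 0 => u
  | n'.+1 => cf_nest a b n' z ((a n)%:C / (z + (b n)%:C - u))
  end.

Definition cf_approx (a b : nat -> R) (n : nat) (z : C) : C := cf_nest a b n z 0.

Definition is_ratfun_of (r : C -> C) (g h : {poly C}) : Prop :=
  h != 0 /\ exists rr : R, forall z, rr%:C < `|z| -> r z = g.[z] / h.[z].

Definition ratfun_deg_le (n : nat) (r : C -> C) : Prop :=
  exists g h : {poly C}, is_ratfun_of r g h /\ coprimep g h /\
    (size g <= n.+1)%N /\ (size h <= n.+1)%N.

Definition eq_near_oo (r s : C -> C) : Prop :=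
  exists rr : R, forall z, rr%:C < `|z| -> r z = s z.

Definition pade_approx (X : set C) (f : C -> C) (n : nat) (r : C -> C) : Prop :=
  (exists g h : {poly C}, is_ratfun_of r g h /\
     (size g <= n)%N /\ (size h <= n.+1)%N) /\
  bigO_at_oo X (fun z => f z - r z) (fun z => (z ^+ (2 * n).+1)^-1).

Definition msupport (mu : {measure set R -> \bar R}) : set R :=
  [set t | forall e : R, 0 < e ->
     let I : set R := [set s | t - e < s < t + e] in (0 < mu I)%E].

Definition moment (mu : {measure set R -> \bar R}) (k : nat) : R :=
  fine (\int[mu]_t (t ^+ k)%:E)%E.

Definition stieltjes (mu : {measure set R -> \bar R}) (z : C) : C :=
  Complex (fine (\int[mu]_t (complex.Re ((z - t%:C)^-1))%:E)%E)
          (fine (\int[mu]_t (complex.Im ((z - t%:C)^-1))%:E)%E).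

Definition sector (delta eps : R) : set C :=
  [set z | z != 0 /\ exists theta : R,
     [/\ - pi < theta <= pi, z = `|z| * (cos theta +i* sin theta)%C
       & delta <= `|theta| <= pi - eps]].

End Defs.

(* Everything reduces to one condition: for every [n], the scaled remainder
   [(f - w_n) z^(2n+1)] stays bounded as [z -> oo] in [X].  The continuants of the
   J-fraction satisfy the Casoratian identity [A_(n+1) B_n - A_n B_(n+1) = a_1 ... a_n],
   so [w_(n+1) - w_n ~ a_1 ... a_(n+1) / z^(2n+1)]; boundedness at [n + 1] therefore makes
   the scaled remainder at [n] converge to [a_1 ... a_(n+1)], which yields (ii)-(vi).
   As [w_n] matches the moment series to order [2n], the condition is also equivalent to
   the expansion (i).  For (iii) the tails [f_n] are ratios of consecutive residuals
   [A_k - f B_k]; for (vii) and (viii), a rational [g / h] of degree at most [n] that agrees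
   with [f] to order [2n + 1] gives a polynomial [g B - A h] which is [O(1/z)] along the
   unbounded set [X], hence zero.  Finally [S_mu(z) - sum_(k<j) m_k / z^(k+1)] equals
   [z^-j int t^j / (z - t) dmu(t)], and [|Im z| >= sin delta sin eps |z|] on the sector. *)

From HB Require Import structures.
From mathcomp Require Import all_boot all_order all_algebra.
From mathcomp Require Import all_classical all_reals all_analysis.
From mathcomp Require Import complex.
From mathcomp Require Import ring lra.
Import Order.TTheory GRing.Theory Num.Theory Normc.
Local Open Scope classical_set_scope.
Local Open Scope ring_scope.
Local Open Scope complex_scope.
Set Implicit Arguments. Unset Strict Implicit. Unset Printing Implicit Defensive.

Local Ltac neq0_side := repeat (match goal with |- is_true (_ && _) => apply/andP; split end);
  rewrite ?mulf_neq0 ?expf_neq0 //.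

Section NormcFacts.
Variable R : rcfType.
Implicit Types x y : R[i].

Lemma norm_normc x : `|x| = (normc x)%:C. Proof. by []. Qed.

Lemma normc_ge0 x : 0 <= normc x. Proof. by rewrite -ler0c -norm_normc. Qed.

Lemma normc_eq0 x : (normc x == 0) = (x == 0).
Proof. by rewrite -(inj_eq (@complexI R)) -norm_normc normr_eq0. Qed.

Lemma normc_gt0 x : (0 < normc x) = (x != 0).
Proof. by rewrite lt_def normc_eq0 normc_ge0 andbT. Qed.

Lemma normcX x k : normc (x ^+ k) = normc x ^+ k.
Proof. by apply: complexI; rewrite rmorphXn -!norm_normc normrX. Qed.

Lemma normc_real (r : R) : normc r%:C = `|r|.
Proof. by rewrite /normc /= expr0n /= addr0 sqrtr_sqr. Qed.

Lemma normcB x y : normc (x - y) = normc (y - x).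
Proof. by rewrite -normcN opprB. Qed.

Lemma lerB_normc x y : normc x - normc y <= normc (x - y).
Proof. by have := le_normcD (x - y) y; rewrite subrK lerBlDr. Qed.

Lemma Re_le_normc x : `|complex.Re x| <= normc x.
Proof. by case: x => u v; rewrite /normc /= -sqrtr_sqr ler_wsqrtr // lerDl sqr_ge0. Qed.

Lemma Im_le_normc x : `|complex.Im x| <= normc x.
Proof. by case: x => u v; rewrite /normc /= -sqrtr_sqr ler_wsqrtr // lerDr sqr_ge0. Qed.

End NormcFacts.

Section AsymptoticsAtInfinity.
Variable R : realType.
Local Notation C := R[i].
Implicit Types (X : set C) (P Q : C -> Prop) (f g h : C -> C) (c L : C).

(* [R[i]] carries no canonical topology, so limits at infinity along [X] are set up directly. *)
Definition near_oo X P := exists r : R, forall z, X z -> r < normc z -> P z.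

Lemma near_ooW X P Q : (forall z, P z -> Q z) -> near_oo X P -> near_oo X Q.
Proof. by move=> PQ [r hr]; exists r => z Xz /(hr z Xz) /PQ. Qed.

Lemma near_ooI X P Q : near_oo X P -> near_oo X Q -> near_oo X (fun z => P z /\ Q z).
Proof.
move=> [r1 h1] [r2 h2]; exists (Num.max r1 r2) => z Xz.
by rewrite gt_max => /andP[z1 z2]; split; [apply: h1 | apply: h2].
Qed.

Lemma near_ooT X P : (forall z, P z) -> near_oo X P.
Proof. by move=> hP; exists 0 => z _ _; apply: hP. Qed.

Lemma near_oo_gt X (r : R) : near_oo X (fun z => r < normc z).
Proof. by exists r. Qed.

Lemma near_oo_setT X P : near_oo setT P -> near_oo X P.
Proof. by move=> [r hr]; exists r => z _; apply: hr. Qed.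

Lemma near_oo_mem X : near_oo X X.
Proof. by exists 0. Qed.

Lemma near_oo_neq0 X : near_oo X (fun z => z != 0).
Proof. by exists 0 => z _; rewrite normc_gt0. Qed.

Definition cvg_oo X h L := forall e : R, 0 < e -> near_oo X (fun z => normc (h z - L) <= e).

Definition bounded_oo X h := exists M : R, near_oo X (fun z => normc (h z) <= M).

Lemma cvg_oo_eq X h1 h2 L :
  near_oo X (fun z => h1 z = h2 z) -> cvg_oo X h1 L -> cvg_oo X h2 L.
Proof. by move=> e12 hL e /hL h; apply: near_ooW (near_ooI e12 h) => z [<-]. Qed.

Lemma bounded_oo_eq X h1 h2 :
  near_oo X (fun z => h1 z = h2 z) -> bounded_oo X h1 -> bounded_oo X h2.
Proof. by move=> e12 [M hM]; exists M; apply: near_ooW (near_ooI e12 hM) => z [<-]. Qed.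

Lemma cvg_oo_setT X h L : cvg_oo setT h L -> cvg_oo X h L.
Proof. by move=> hL e /hL; apply: near_oo_setT. Qed.

Lemma bounded_oo_setT X h : bounded_oo setT h -> bounded_oo X h.
Proof. by move=> [M hM]; exists M; apply: near_oo_setT. Qed.

Lemma cvg_oo_subr0P X h L : cvg_oo X (fun z => h z - L) 0 <-> cvg_oo X h L.
Proof. by split=> hL e /hL; apply: near_ooW => z; rewrite subr0. Qed.

Lemma cvg_oo_cst X c : cvg_oo X (fun=> c) c.
Proof. by move=> e e0; apply: near_ooT => z; rewrite subrr normc0 ltW. Qed.

Lemma cvg_ooD X h1 h2 L1 L2 :
  cvg_oo X h1 L1 -> cvg_oo X h2 L2 -> cvg_oo X (fun z => h1 z + h2 z) (L1 + L2).
Proof.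
move=> l1 l2 e e0; have e2 : 0 < e / 2 by rewrite divr_gt0.
apply: near_ooW (near_ooI (l1 _ e2) (l2 _ e2)) => z [c1 c2].
rewrite (_ : _ - _ = (h1 z - L1) + (h2 z - L2)); last by ring.
by apply: le_trans (le_normcD _ _) _; lra.
Qed.

Lemma cvg_ooN X h L : cvg_oo X h L -> cvg_oo X (fun z => - h z) (- L).
Proof. by move=> hL e /hL; apply: near_ooW => z; rewrite -opprD normcN. Qed.

Lemma cvg_ooB X h1 h2 L1 L2 :
  cvg_oo X h1 L1 -> cvg_oo X h2 L2 -> cvg_oo X (fun z => h1 z - h2 z) (L1 - L2).
Proof. by move=> l1 /cvg_ooN; apply: cvg_ooD. Qed.

Lemma cvg_oo_bounded X h L : cvg_oo X h L -> bounded_oo X h.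
Proof.
move=> hL; exists (normc L + 1); apply: near_ooW (hL 1 ltr01) => z hz.
by have := le_normcD (h z - L) L; rewrite subrK; lra.
Qed.

Lemma bounded_oo_cst X c : bounded_oo X (fun=> c).
Proof. exact: cvg_oo_bounded (cvg_oo_cst X c). Qed.

Lemma bounded_ooD X h1 h2 :
  bounded_oo X h1 -> bounded_oo X h2 -> bounded_oo X (fun z => h1 z + h2 z).
Proof.
move=> [M1 b1] [M2 b2]; exists (M1 + M2).
by apply: near_ooW (near_ooI b1 b2) => z [c1 c2]; apply: le_trans (le_normcD _ _) _; lra.
Qed.

Lemma bounded_ooN X h : bounded_oo X h -> bounded_oo X (fun z => - h z).
Proof. by move=> [M b]; exists M; apply: near_ooW b => z; rewrite normcN. Qed.

Lemma bounded_ooB X h1 h2 :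
  bounded_oo X h1 -> bounded_oo X h2 -> bounded_oo X (fun z => h1 z - h2 z).
Proof. by move=> b1 /bounded_ooN; apply: bounded_ooD. Qed.

Lemma bounded_ooM X h1 h2 :
  bounded_oo X h1 -> bounded_oo X h2 -> bounded_oo X (fun z => h1 z * h2 z).
Proof.
move=> [M1 b1] [M2 b2]; exists (M1 * M2).
by apply: near_ooW (near_ooI b1 b2) => z [c1 c2]; rewrite normcM ler_pM ?normc_ge0.
Qed.

Lemma cvg_oo0M_bounded X f g :
  cvg_oo X f 0 -> bounded_oo X g -> cvg_oo X (fun z => f z * g z) 0.
Proof.
move=> f0 [M bg] e e0.
have M1 : 0 < `|M| + 1 by rewrite ltr_wpDl.
have eM : 0 < e / (`|M| + 1) by rewrite divr_gt0.
apply: near_ooW (near_ooI (f0 _ eM) bg) => z [c1 c2].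
rewrite subr0 in c1; rewrite subr0 normcM -[e](divfK (lt0r_neq0 M1)).
by rewrite ler_pM ?normc_ge0 //; have := ler_norm M; lra.
Qed.

Lemma bounded_cvg_oo0M X f g :
  bounded_oo X f -> cvg_oo X g 0 -> cvg_oo X (fun z => f z * g z) 0.
Proof.
move=> bf g0; apply: cvg_oo_eq (cvg_oo0M_bounded g0 bf).
by apply: near_ooT => z; rewrite mulrC.
Qed.

Lemma cvg_ooM X h1 h2 L1 L2 :
  cvg_oo X h1 L1 -> cvg_oo X h2 L2 -> cvg_oo X (fun z => h1 z * h2 z) (L1 * L2).
Proof.
move=> l1 l2; apply/cvg_oo_subr0P.
have e1 : cvg_oo X (fun z => (h1 z - L1) * h2 z) 0.
  by apply: cvg_oo0M_bounded; [apply/cvg_oo_subr0P | apply: cvg_oo_bounded l2].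
have e2 : cvg_oo X (fun z => L1 * (h2 z - L2)) 0.
  by apply: bounded_cvg_oo0M; [apply: bounded_oo_cst | apply/cvg_oo_subr0P].
by move: (cvg_ooD e1 e2); rewrite addr0; apply: cvg_oo_eq; apply: near_ooT => z; ring.
Qed.

Lemma cvg_oo_normc_ge X h L : cvg_oo X h L -> L != 0 ->
  near_oo X (fun z => normc L / 2 <= normc (h z)).
Proof.
move=> hL L0; have L2 : 0 < normc L / 2 by rewrite divr_gt0 // normc_gt0.
apply: near_ooW (hL _ L2) => z; rewrite normcB.
by have := lerB_normc L (h z); lra.
Qed.

Lemma cvg_oo_neq0 X h L : cvg_oo X h L -> L != 0 -> near_oo X (fun z => h z != 0).
Proof.
move=> hL L0; apply: near_ooW (cvg_oo_normc_ge hL L0) => z hz.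
by rewrite -normc_gt0 (lt_le_trans _ hz) // divr_gt0 // normc_gt0.
Qed.

Lemma cvg_ooV X h L : cvg_oo X h L -> L != 0 -> cvg_oo X (fun z => (h z)^-1) L^-1.
Proof.
move=> hL L0; have L2 : 0 < normc L / 2 by rewrite divr_gt0 // normc_gt0.
have bV : bounded_oo X (fun z => (h z)^-1 * L^-1).
  exists ((normc L / 2)^-1 * (normc L)^-1).
  apply: near_ooW (cvg_oo_normc_ge hL L0) => z hz.
  rewrite normcM !normcV ler_pM ?invr_ge0 ?normc_ge0 //.
  by rewrite lef_pV2 // posrE (lt_le_trans L2 hz).
apply/cvg_oo_subr0P; move: (cvg_oo0M_bounded (proj2 (cvg_oo_subr0P _ _ _) (cvg_ooN hL)) bV).
apply: cvg_oo_eq; apply: near_ooW (cvg_oo_neq0 hL L0) => z hz.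
by field; rewrite hz L0.
Qed.

Lemma cvg_oo_inv X : cvg_oo X (fun z => z^-1) 0.
Proof.
move=> e e0; exists e^-1 => z _ hz; have z0 : 0 < normc z by apply: lt_trans hz; rewrite invr_gt0.
by rewrite subr0 normcV -(invrK e) lef_pV2 ?posrE ?invr_gt0 // ltW.
Qed.

Lemma cvg_ooX X h L k : cvg_oo X h L -> cvg_oo X (fun z => h z ^+ k) (L ^+ k).
Proof.
move=> hL; elim: k => [|k ih].
  by apply: cvg_oo_eq (cvg_oo_cst X 1); apply: near_ooT => z; rewrite !expr0.
by rewrite exprS; apply: cvg_oo_eq (cvg_ooM hL ih); apply: near_ooT => z; rewrite exprS.
Qed.

Lemma cvg_oo_inv_exp X k : cvg_oo X (fun z => z^-1 ^+ k.+1) 0.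
Proof. by have := cvg_ooX k.+1 (cvg_oo_inv X); rewrite expr0n. Qed.

Lemma cvg_oo_sum X (I : Type) (s : seq I) (F : I -> C -> C) (L : I -> C) :
  (forall i, cvg_oo X (F i) (L i)) ->
  cvg_oo X (fun z => \sum_(i <- s) F i z) (\sum_(i <- s) L i).
Proof.
move=> hF; elim: s => [|i s ih].
  by rewrite big_nil; apply: cvg_oo_eq (cvg_oo_cst X 0); apply: near_ooT => z; rewrite big_nil.
rewrite big_cons; apply: cvg_oo_eq (cvg_ooD (hF i) ih).
by apply: near_ooT => z; rewrite big_cons.
Qed.

Lemma cvg_oo0_normc_le_inv X h (K : R) :
  near_oo X (fun z => normc (h z) <= K / normc z) -> cvg_oo X h 0.
Proof.
move=> hK; have hz : bounded_oo X (fun z => h z * z).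
  exists K; apply: near_ooW (near_ooI hK (near_oo_neq0 X)) => z [hz z0].
  by rewrite normcM -ler_pdivlMr ?normc_gt0.
apply: cvg_oo_eq (bounded_cvg_oo0M hz (cvg_oo_inv X)).
by apply: near_ooW (near_oo_neq0 X) => z z0; rewrite mulrK.
Qed.

End AsymptoticsAtInfinity.

Section LandauAtInfinity.
Variable R : realType.
Local Notation C := R[i].
Implicit Types (X : set C) (f g : C -> C) (c : C).

Lemma ltc_normc (r : R) (z : C) : (r%:C < `|z|) = (r < normc z).
Proof. by rewrite norm_normc ltcR. Qed.

Lemma lec_normcM (M : R) (x y : C) : (`|x| <= M%:C * `|y|) = (normc x <= M * normc y).
Proof. by rewrite !norm_normc -rmorphM lecR. Qed.

Lemma littleo_at_ooP X f g : littleo_at_oo X f g <->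
  forall e : R, 0 < e -> near_oo X (fun z => normc (f z) <= e * normc (g z)).
Proof.
split=> h e /h [r hr]; exists r => z Xz hz.
  by rewrite -lec_normcM; apply: hr; rewrite ?ltc_normc.
by rewrite lec_normcM; apply: hr; rewrite -?ltc_normc.
Qed.

Lemma bigO_at_ooP X f g : bigO_at_oo X f g <->
  exists M : R, near_oo X (fun z => normc (f z) <= M * normc (g z)).
Proof.
split=> -[M [r hr]]; exists M, r => z Xz hz.
  by rewrite -lec_normcM; apply: hr; rewrite ?ltc_normc.
by rewrite lec_normcM; apply: hr; rewrite -?ltc_normc.
Qed.

Lemma littleo_at_oo_divP X f g : near_oo X (fun z => g z != 0) ->
  littleo_at_oo X f g <-> cvg_oo X (fun z => f z / g z) 0.
Proof.
move=> g0; rewrite littleo_at_ooP.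
by split=> h e /h he; apply: near_ooW (near_ooI g0 he) => z [gz];
  rewrite subr0 normcM normcV ler_pdivrMr ?normc_gt0.
Qed.

Lemma bigO_at_oo_divP X f g : near_oo X (fun z => g z != 0) ->
  bigO_at_oo X f g <-> bounded_oo X (fun z => f z / g z).
Proof.
move=> g0; rewrite bigO_at_ooP.
by split=> -[M hM]; exists M; apply: near_ooW (near_ooI g0 hM) => z [gz];
  rewrite normcM normcV ler_pdivrMr ?normc_gt0.
Qed.

Lemma near_oo_inv_exp_neq0 X k : near_oo X (fun z => (z ^+ k)^-1 != 0).
Proof. by apply: near_ooW (near_oo_neq0 X) => z z0; rewrite invr_eq0 expf_neq0. Qed.

Lemma littleo_inv_expP X f k :
  littleo_at_oo X f (fun z => (z ^+ k)^-1) <-> cvg_oo X (fun z => f z * z ^+ k) 0.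
Proof.
rewrite (littleo_at_oo_divP f (near_oo_inv_exp_neq0 X k)).
suff -> : (fun z => f z / (z ^+ k)^-1) = (fun z => f z * z ^+ k) by [].
by apply: funext => z; rewrite invrK.
Qed.

Lemma bigO_inv_expP X f k :
  bigO_at_oo X f (fun z => (z ^+ k)^-1) <-> bounded_oo X (fun z => f z * z ^+ k).
Proof.
rewrite (bigO_at_oo_divP f (near_oo_inv_exp_neq0 X k)).
suff -> : (fun z => f z / (z ^+ k)^-1) = (fun z => f z * z ^+ k) by [].
by apply: funext => z; rewrite invrK.
Qed.

Lemma asym_equiv_expP X f k c : c != 0 ->
  asym_equiv X f (fun z => c / z ^+ k) <-> cvg_oo X (fun z => f z * z ^+ k) c.
Proof.
move=> c0; rewrite /asym_equiv littleo_at_oo_divP; last first.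
  by apply: near_ooW (near_oo_neq0 X) => z z0; rewrite mulf_neq0 ?invr_eq0 ?expf_neq0.
split=> h.
  have := cvg_ooD (cvg_ooM h (cvg_oo_cst X c)) (cvg_oo_cst X c).
  rewrite mul0r add0r; apply: cvg_oo_eq; apply: near_ooW (near_oo_neq0 X) => z z0.
  by field; neq0_side.
have := cvg_ooM (cvg_ooB h (cvg_oo_cst X c)) (cvg_oo_cst X c^-1).
rewrite subrr mul0r; apply: cvg_oo_eq; apply: near_ooW (near_oo_neq0 X) => z z0.
by field; neq0_side.
Qed.

End LandauAtInfinity.

Section PolynomialsAtInfinity.
Variable R : realType.
Local Notation C := R[i].
Implicit Types (X : set C) (p : {poly C}).

Lemma cvg_oo_horner_div_exp X p n : (size p <= n.+1)%N ->
  cvg_oo X (fun z => p.[z] / z ^+ n) p`_n.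
Proof.
move=> sp; have e : near_oo X (fun z => \sum_(i < n.+1) p`_i * z^-1 ^+ (n - i) = p.[z] / z ^+ n).
  apply: near_ooW (near_oo_neq0 X) => z z0.
  rewrite (horner_coef_wide z sp) mulr_suml; apply: eq_bigr => i _.
  have hi : (i <= n)%N by rewrite -ltnS ltn_ord.
  have -> : z ^+ n = z ^+ i * z ^+ (n - i) by rewrite -exprD subnKC.
  by rewrite exprVn; field; neq0_side.
apply: cvg_oo_eq e _; have -> : p`_n = \sum_(i < n.+1) p`_i * 0 ^+ (n - i).
  rewrite big_ord_recr /= subnn expr0 mulr1 big1 ?add0r // => i _.
  by rewrite expr0n subn_eq0 leqNgt ltn_ord mulr0.
by apply: cvg_oo_sum => i; apply: cvg_ooM (cvg_oo_cst X _) (cvg_ooX _ (cvg_oo_inv X)).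
Qed.

Lemma horner_normc_ge X p : p != 0 ->
  exists2 c : R, 0 < c & near_oo X (fun z => c <= normc p.[z]).
Proof.
move=> p0; have sp : (size p <= (size p).-1.+1)%N by rewrite leqSpred.
have lp : p`_(size p).-1 != 0 by rewrite -lead_coefE lead_coef_eq0.
exists (normc p`_(size p).-1 / 2); first by rewrite divr_gt0 // normc_gt0.
apply: near_ooW (near_ooI (cvg_oo_normc_ge (cvg_oo_horner_div_exp X sp) lp) (near_oo_gt X 1)).
move=> z [h1 z1]; have z0 : z != 0 by rewrite -normc_gt0 (lt_trans ltr01 z1).
apply: le_trans h1 _; rewrite normcM normcV normcX ler_pdivrMr ?exprn_gt0 ?normc_gt0 //.
by rewrite ler_peMr ?normc_ge0 // exprn_ege1 // ltW.
Qed.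

Lemma near_oo_horner_neq0 X p : p != 0 -> near_oo X (fun z => p.[z] != 0).
Proof.
move=> /(horner_normc_ge X) [c c0]; apply: near_ooW => z hz.
by rewrite -normc_gt0 (lt_le_trans c0 hz).
Qed.

Lemma horner_cvg_oo0_eq0 X p : unbounded X -> cvg_oo X (fun z => p.[z]) 0 -> p = 0.
Proof.
move=> Xu p0; apply/eqP/negP => /negP /(horner_normc_ge X) [c c0 hc].
have c2 : 0 < c / 2 by rewrite divr_gt0.
have [r hr] := near_ooI hc (p0 _ c2); have [z Xz] := Xu r; rewrite ltc_normc => hz.
by have [] := hr z Xz hz; rewrite subr0; lra.
Qed.

End PolynomialsAtInfinity.

Section ThreeTermRecurrence.
Variables (F : comNzRingType) (alpha beta : nat -> F).

Fixpoint three_term (y0 y1 : {poly F}) (n : nat) : {poly F} * {poly F} :=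
  if n is n'.+1 then
    let: (u, v) := three_term y0 y1 n' in (v, ('X + (beta n)%:P) * v - (alpha n)%:P * u)
  else (y0, y1).

Lemma three_termS y0 y1 n : (three_term y0 y1 n.+2).1 =
  ('X + (beta n.+1)%:P) * (three_term y0 y1 n.+1).1 - (alpha n.+1)%:P * (three_term y0 y1 n).1.
Proof. by rewrite /=; case: three_term. Qed.

End ThreeTermRecurrence.

(* [cf_num n.+1 / cf_den n.+1] is the [n]-th approximant; index [0] holds the
   conventional values [A_(-1) = -1] and [B_(-1) = 0]. *)
HB.lock Definition cf_num (F : comNzRingType) (alpha beta : nat -> F) n :=
  (three_term alpha beta (-1) 0 n).1.
HB.lock Definition cf_den (F : comNzRingType) (alpha beta : nat -> F) n :=
  (three_term alpha beta 0 1 n).1.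

Section ContinuantPolynomials.
Variables (F : comNzRingType) (alpha beta : nat -> F).
Local Notation cf_num := (cf_num alpha beta).
Local Notation cf_den := (cf_den alpha beta).

Lemma cf_numS n : cf_num n.+2 = ('X + (beta n.+1)%:P) * cf_num n.+1 - (alpha n.+1)%:P * cf_num n.
Proof. by rewrite unlock three_termS. Qed.

Lemma cf_denS n : cf_den n.+2 = ('X + (beta n.+1)%:P) * cf_den n.+1 - (alpha n.+1)%:P * cf_den n.
Proof. by rewrite unlock three_termS. Qed.

Lemma cf_casoratian n :
  cf_num n.+1 * cf_den n - cf_num n * cf_den n.+1 = (\prod_(1 <= i < n.+1) alpha i)%:P.
Proof.
elim: n => [|n ih]; first by rewrite big_geq // !unlock /= mul0r sub0r mulN1r opprK.
rewrite big_nat_recr //= polyCM -ih cf_numS cf_denS.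
by move: ('X + _) (alpha n.+1)%:P (cf_num n.+1) (cf_num n) (cf_den n.+1) (cf_den n) => *; ring.
Qed.

Lemma cf_den_monic_size n : cf_den n.+1 \is monic /\ size (cf_den n.+1) = n.+1.
Proof.
suff [] : [/\ cf_den n.+1 \is monic, size (cf_den n.+1) = n.+1 & (size (cf_den n) <= n)%N] by [].
elim: n => [|n [m s s']]; first by rewrite unlock /= monic1 size_poly1 size_poly0.
have mX : ('X + (beta n.+1)%:P) * cf_den n.+1 \is monic by rewrite monicMl ?monicXaddC.
have sX : size (('X + (beta n.+1)%:P) * cf_den n.+1) = n.+2.
  by rewrite size_monicM ?monicXaddC ?monic_neq0 // size_XaddC s.
have sA : (size (- ((alpha n.+1)%:P * cf_den n)) < n.+2)%N.
  by rewrite size_polyN mul_polyC ltnS (leq_trans (size_scale_leq _ _)) ?(leq_trans s').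
rewrite cf_denS s leqnn; split => //.
  by rewrite monicE lead_coefDl ?sX // (eqP mX).
by rewrite size_polyDl sX.
Qed.

Lemma size_cf_den n : (size (cf_den n) <= n)%N.
Proof. by case: n => [|n]; [rewrite unlock size_poly0 | rewrite (cf_den_monic_size n).2]. Qed.

Lemma size_cf_num n : (size (cf_num n.+1) <= n)%N.
Proof.
suff [] : (size (cf_num n.+1) <= n)%N /\ (size (cf_num n) <= n.+1)%N by [].
elim: n => [|n [s s']]; first by rewrite unlock /= size_poly0 size_polyN size_poly1.
split; last exact: leq_trans s (leqW (leqnSn n)).
rewrite cf_numS (leq_trans (size_polyD _ _)) // geq_max; apply/andP; split.
  rewrite (leq_trans (size_polyMleq _ _)) // size_XaddC /=.
  by case: (size (cf_num n.+1)) s.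
by rewrite size_polyN mul_polyC (leq_trans (size_scale_leq _ _)).
Qed.

End ContinuantPolynomials.

Section ContinuedFraction.
Variable R : realType.
Local Notation C := R[i].
Variables a b : nat -> R.
Hypothesis a_neq0 : forall n, (0 < n)%N -> a n != 0.

Local Notation A := (cf_num (fun n => (a n)%:C) (fun n => (b n)%:C)).
Local Notation B := (cf_den (fun n => (a n)%:C) (fun n => (b n)%:C)).
Local Notation w := (cf_approx a b).

Definition aprod n := \prod_(1 <= i < n.+1) a i.

Lemma aprodS n : aprod n.+1 = aprod n * a n.+1.
Proof. by rewrite /aprod big_nat_recr. Qed.

Lemma aC_neq0 n : (a n.+1)%:C != 0.
Proof. by rewrite fmorph_eq0 a_neq0. Qed.

Lemma aprodC_neq0 n : (aprod n)%:C != 0.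
Proof.
rewrite fmorph_eq0; elim: n => [|n ih]; first by rewrite /aprod big_geq ?oner_neq0.
by rewrite aprodS mulf_neq0 ?a_neq0.
Qed.

Lemma horner_cf_numS n z :
  (A n.+2).[z] = (z + (b n.+1)%:C) * (A n.+1).[z] - (a n.+1)%:C * (A n).[z].
Proof. by rewrite cf_numS !hornerE. Qed.

Lemma horner_cf_denS n z :
  (B n.+2).[z] = (z + (b n.+1)%:C) * (B n.+1).[z] - (a n.+1)%:C * (B n).[z].
Proof. by rewrite cf_denS !hornerE. Qed.

Lemma horner_cf_casoratian n z :
  (A n.+1).[z] * (B n).[z] - (A n).[z] * (B n.+1).[z] = (aprod n)%:C.
Proof. by rewrite -!hornerM -hornerN -hornerD cf_casoratian hornerC /aprod rmorph_prod. Qed.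

Lemma coprimep_cf_num_den n : coprimep (A n.+1) (B n.+1).
Proof.
apply/Bezout_coprimepP; exists ((aprod n)%:C^-1%:P * B n, - ((aprod n)%:C^-1%:P * A n)) => /=.
rewrite mulNr -!mulrA -mulrBr [B n * _]mulrC cf_casoratian -polyCM.
by rewrite /aprod rmorph_prod mulVf -?rmorph_prod ?aprodC_neq0 // eqpxx.
Qed.

(* The bound [|u| <= 1] passes to [a_(n+1) / (z + b_(n+1) - u)], which drives the induction. *)
Lemma cf_nest_frac n : exists r : R, forall z u, r < normc z -> normc u <= 1 ->
  (B n.+1).[z] - u * (B n).[z] != 0 /\
  cf_nest a b n z u = ((A n.+1).[z] - u * (A n).[z]) / ((B n.+1).[z] - u * (B n).[z]).
Proof.
elim: n => [|n [r ih]].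
  exists 0 => z u _ _; rewrite !unlock /= horner0 hornerN !hornerC.
  by rewrite mulr0 subr0 oner_neq0 sub0r mulrN1 opprK divr1.
exists (`|r| + `|b n.+1| + `|a n.+1| + 1) => z u hz hu.
have hD : `|r| + `|a n.+1| < normc (z + (b n.+1)%:C - u).
  have := lerB_normc z (- (b n.+1)%:C); rewrite opprK normcN normc_real.
  by have := lerB_normc (z + (b n.+1)%:C) u; lra.
have D0 : z + (b n.+1)%:C - u != 0 by rewrite -normc_gt0 (le_lt_trans _ hD) ?addr_ge0.
have factor y2 y1 y0 : y2 = (z + (b n.+1)%:C) * y1 - (a n.+1)%:C * y0 ->
    y2 - u * y1 = (z + (b n.+1)%:C - u) * (y1 - (a n.+1)%:C / (z + (b n.+1)%:C - u) * y0).
  by move=> ->; field.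
set D := z + (b n.+1)%:C - u in hD D0 factor *.
have hv : normc ((a n.+1)%:C / D) <= 1.
  rewrite normcM normcV normc_real ler_pdivrMr ?mul1r ?normc_gt0 //.
  by have := normr_ge0 r; lra.
have hr : r < normc z.
  by have := ler_norm r; have := normr_ge0 (b n.+1); have := normr_ge0 (a n.+1); lra.
have [nz e] := ih z _ hr hv.
rewrite (factor _ _ _ (horner_cf_numS n z)) (factor _ _ _ (horner_cf_denS n z)).
split; first by rewrite mulf_neq0.
rewrite [LHS]e; move: nz; move: (A n.+1).[z] (A n).[z] (B n.+1).[z] (B n).[z] => p1 p0 q1 q0 nz.
have nz' : q1 * D - (a n.+1)%:C * q0 != 0.
  have -> : q1 * D - (a n.+1)%:C * q0 = D * (q1 - (a n.+1)%:C / D * q0) by field.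
  by rewrite mulf_neq0.
by field; rewrite D0 nz'.
Qed.

Lemma near_oo_cf_approx n :
  near_oo setT (fun z => (B n.+1).[z] != 0 /\ w n z = (A n.+1).[z] / (B n.+1).[z]).
Proof.
have [r h] := cf_nest_frac n; exists r => z _ hz.
by have [] := h z 0 hz; rewrite ?normc0 // !mul0r !subr0.
Qed.

Lemma cvg_oo_cf_den X n : cvg_oo X (fun z => (B n.+1).[z] / z ^+ n) 1.
Proof.
have [m s] := cf_den_monic_size (fun n => (a n)%:C) (fun n => (b n)%:C) n.
have := @cvg_oo_horner_div_exp _ X (B n.+1) n; rewrite s => /(_ (leqnn _)).
by move/monicP: m; rewrite lead_coefE s /= => ->.
Qed.

Definition cf_diff n z := w n.+1 z - w n z.

(* By the Casoratian, [cf_diff n = aprod (n+1) / (B_(n+2) B_(n+1))], and [B_(n+2) B_(n+1) ~ z^(2n+1)]. *)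
Lemma cvg_oo_cf_diff X n :
  cvg_oo X (fun z => cf_diff n z * z ^+ (2 * n).+1) (aprod n.+1)%:C.
Proof.
apply: cvg_oo_setT.
have e : near_oo setT (fun z => (aprod n.+1)%:C *
    ((B n.+2).[z] / z ^+ n.+1 * ((B n.+1).[z] / z ^+ n))^-1 = cf_diff n z * z ^+ (2 * n).+1).
  apply: near_ooW (near_ooI (near_ooI (near_oo_cf_approx n) (near_oo_cf_approx n.+1))
    (near_oo_neq0 _)) => z [[[q1 e1] [q2 e2]] z0].
  rewrite /cf_diff e1 e2 -(horner_cf_casoratian n.+1 z).
  have -> : (2 * n).+1 = (n.+1 + n)%N by rewrite addSn addnn mul2n.
  rewrite exprD; move: q1 q2; move: (B n.+1).[z] (B n.+2).[z] (A n.+1).[z] (A n.+2).[z].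
  by move=> q1 q2 p1 p2 h1 h2; field; neq0_side.
apply: cvg_oo_eq e _.
have := cvg_ooM (cvg_oo_cst setT (aprod n.+1)%:C)
  (cvg_ooV (cvg_ooM (cvg_oo_cf_den setT n.+1) (cvg_oo_cf_den setT n)) (mulf_neq0 (oner_neq0 _) (oner_neq0 _))).
by rewrite mulr1 invr1 mulr1.
Qed.

Lemma near_oo_cf_diff_neq0 X n : near_oo X (fun z => cf_diff n z != 0).
Proof.
apply: near_ooW (cvg_oo_neq0 (cvg_oo_cf_diff X n) (aprodC_neq0 _)) => z.
by rewrite mulf_eq0 negb_or => /andP[].
Qed.

Lemma cf_diff_littleo X k : littleo_at_oo X (cf_diff k.+1) (cf_diff k).
Proof.
apply/(littleo_at_oo_divP _ (near_oo_cf_diff_neq0 X k)).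
have e : near_oo X (fun z => cf_diff k.+1 z * z ^+ (2 * k.+1).+1 *
    (cf_diff k z * z ^+ (2 * k).+1)^-1 * z^-1 ^+ 2 = cf_diff k.+1 z / cf_diff k z).
  apply: near_ooW (near_ooI (near_oo_neq0 _) (near_oo_cf_diff_neq0 X k)) => z [z0 d0].
  rewrite (_ : (2 * k.+1).+1 = (2 * k).+1.+2)%N; last by rewrite mulnS add2n.
  have x0 : z ^+ (2 * k) != 0 by rewrite expf_neq0.
  rewrite !exprS; move: d0 x0; move: (cf_diff k.+1 z) (cf_diff k z) (z ^+ (2 * k)).
  by move=> d1 d x d0 x0; field; neq0_side.
apply: cvg_oo_eq e _.
have := cvg_ooM (cvg_ooM (cvg_oo_cf_diff X k.+1) (cvg_ooV (cvg_oo_cf_diff X k) (aprodC_neq0 _)))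
  (cvg_oo_inv_exp X 1).
by rewrite mulr0.
Qed.

End ContinuedFraction.

Section ContinuedFractionRemainder.
Variable R : realType.
Local Notation C := R[i].
Variables a b : nat -> R.
Hypothesis a_neq0 : forall n, (0 < n)%N -> a n != 0.
Local Notation w := (cf_approx a b).
Local Notation cf_diff := (cf_diff a b).
Variables (X : set C) (f : C -> C).

Definition cf_rem n z := (f z - w n z) * z ^+ (2 * n).+1.

Lemma cvg_oo_cf_rem n : bounded_oo X (cf_rem n.+1) -> cvg_oo X (cf_rem n) (aprod a n.+1)%:C.
Proof.
move=> bn; have e : near_oo X (fun z =>
    cf_rem n.+1 z * z^-1 ^+ 2 + cf_diff n z * z ^+ (2 * n).+1 = cf_rem n z).
  apply: near_ooW (near_oo_neq0 X) => z z0; rewrite /cf_rem /cf_diff.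
  rewrite (_ : (2 * n.+1).+1 = (2 * n).+1.+2)%N; last by rewrite mulnS add2n.
  have x0 : z ^+ (2 * n).+1 != 0 by rewrite expf_neq0.
  rewrite !exprS expr0 mulr1; move: x0; move: (w n.+1 z) (w n z) (f z) (z ^+ (2 * n).+1).
  by move=> w1 w0 fz x x0; field; neq0_side.
apply: cvg_oo_eq e _; rewrite -[L in cvg_oo _ _ L]add0r.
exact: cvg_ooD (bounded_cvg_oo0M bn (cvg_oo_inv_exp X 1)) (cvg_oo_cf_diff a b X n).
Qed.

Lemma bounded_cf_rem_le m n : (m <= n)%N -> bounded_oo X (cf_rem n) -> bounded_oo X (cf_rem m).
Proof.
move=> /subnKC <-; elim: (n - m)%N => [|k ih]; first by rewrite addn0.
by rewrite addnS => /cvg_oo_cf_rem /cvg_oo_bounded /ih.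
Qed.

Lemma cf_asymp_cf_remP : cf_asymp X f w <-> forall n, bounded_oo X (cf_rem n).
Proof.
have nz n : near_oo X (fun z => cf_diff n z * z ^+ (2 * n).+1 != 0).
  exact: cvg_oo_neq0 (cvg_oo_cf_diff a b X n) (aprodC_neq0 a_neq0 _).
have dnz n := near_oo_cf_diff_neq0 b a_neq0 X n.
split=> [[_ hO] n | hB].
  apply: bounded_oo_eq (bounded_ooM ((bigO_at_oo_divP _ (dnz n)).1 (hO n))
    (cvg_oo_bounded (cvg_oo_cf_diff a b X n))).
  apply: near_ooW (nz n) => z; rewrite mulf_eq0 negb_or => /andP[d0 _].
  by rewrite /cf_rem mulrA divfK.
split=> [[|k] // _ | n]; first exact: cf_diff_littleo.
apply/(bigO_at_oo_divP _ (dnz n)); apply: bounded_oo_eq (bounded_ooM (hB n)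
  (cvg_oo_bounded (cvg_ooV (cvg_oo_cf_diff a b X n) (aprodC_neq0 a_neq0 _)))).
apply: near_ooW (nz n) => z; rewrite mulf_eq0 negb_or => /andP[_ x0].
by rewrite /cf_rem invfM mulrACA mulfV ?mulr1.
Qed.

Lemma asym_equiv_cf_remP :
  (forall n, asym_equiv X (fun z => f z - w n z) (fun z => (aprod a n.+1)%:C / z ^+ (2 * n).+1))
  <-> forall n, bounded_oo X (cf_rem n).
Proof.
split=> h n.
  exact/cvg_oo_bounded/(asym_equiv_expP _ _ _ (aprodC_neq0 a_neq0 n.+1)).
exact/(asym_equiv_expP _ _ _ (aprodC_neq0 a_neq0 n.+1))/cvg_oo_cf_rem.
Qed.

Lemma bigO_cf_remP :
  (forall n, bigO_at_oo X (fun z => f z - w n z) (fun z => (z ^+ (2 * n).+1)^-1))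
  <-> forall n, bounded_oo X (cf_rem n).
Proof. by split=> h n; apply/bigO_inv_expP; apply: h. Qed.

Lemma bigO_cofinal_cf_remP :
  (forall N, exists2 n, (N <= n)%N &
     bigO_at_oo X (fun z => f z - w n z) (fun z => (z ^+ (2 * n).+1)^-1))
  <-> forall n, bounded_oo X (cf_rem n).
Proof.
split=> [h n | h N]; last by exists N => //; apply/bigO_inv_expP; apply: h.
by have [m nm /bigO_inv_expP] := h n; apply: bounded_cf_rem_le.
Qed.

End ContinuedFractionRemainder.

Section SeriesRemainder.
Variable R : realType.
Local Notation C := R[i].
Variables (a b : nat -> R) (c : nat -> C).
Local Notation w := (cf_approx a b).

Definition series_trunc j z := \sum_(0 <= k < j) c k / z ^+ k.+1.

Lemma series_truncS j z : series_trunc j.+1 z = series_trunc j z + c j / z ^+ j.+1.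
Proof. by rewrite /series_trunc big_nat_recr. Qed.

Hypothesis approx_trunc : forall n, (0 < n)%N ->
  littleo_at_oo setT (fun z => w n z - series_trunc (2 * n) z) (fun z => (z ^+ (2 * n))^-1).

(* Compare with [w_(n+1)], which matches two more terms of the series. *)
Lemma bounded_cf_approx_trunc n :
  bounded_oo setT (fun z => (w n z - series_trunc (2 * n) z) * z ^+ (2 * n).+1).
Proof.
have l1 : cvg_oo setT (fun z => (w n.+1 z - series_trunc (2 * n.+1) z) * z ^+ (2 * n.+1)) 0.
  exact/littleo_inv_expP/approx_trunc.
have e : near_oo setT (fun z =>
    (w n.+1 z - series_trunc (2 * n.+1) z) * z ^+ (2 * n.+1) * z^-1
    - cf_diff a b n z * z ^+ (2 * n).+1 + (c (2 * n) + c (2 * n).+1 * z^-1)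
    = (w n z - series_trunc (2 * n) z) * z ^+ (2 * n).+1).
  apply: near_ooW (near_oo_neq0 _) => z z0.
  rewrite (_ : 2 * n.+1 = (2 * n).+2)%N; last by rewrite mulnS add2n.
  rewrite !series_truncS /cf_diff; have x0 : z ^+ (2 * n) != 0 by rewrite expf_neq0.
  rewrite !exprS; move: x0; move: (w n.+1 z) (w n z) (series_trunc (2 * n) z) (z ^+ (2 * n)).
  by move=> w1 w0 s x x0; field; neq0_side.
apply: bounded_oo_eq e _; apply: bounded_ooD; first apply: bounded_ooB.
- exact: cvg_oo_bounded (cvg_oo0M_bounded l1 (cvg_oo_bounded (cvg_oo_inv setT))).
- exact: cvg_oo_bounded (cvg_oo_cf_diff a b setT n).
- exact: cvg_oo_bounded (cvg_ooD (cvg_oo_cst _ _) (cvg_ooM (cvg_oo_cst _ _) (cvg_oo_inv _))).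
Qed.

Variables (X : set C) (f : C -> C).

Definition series_rem j z := (f z - series_trunc j z) * z ^+ j.+1.

Lemma series_remS j : near_oo X (fun z => series_rem j.+1 z * z^-1 + c j = series_rem j z).
Proof.
apply: near_ooW (near_oo_neq0 X) => z z0; rewrite /series_rem series_truncS.
have x0 : z ^+ j.+1 != 0 by rewrite expf_neq0.
rewrite (exprS z j.+1); move: x0; move: (series_trunc j z) (f z) (z ^+ j.+1).
by move=> s fz x x0; field; neq0_side.
Qed.

Lemma bounded_series_rem_le i j :
  (i <= j)%N -> bounded_oo X (series_rem j) -> bounded_oo X (series_rem i).
Proof.
move=> /subnKC <-; elim: (j - i)%N => [|k ih]; first by rewrite addn0.
rewrite addnS => bk; apply/ih/(bounded_oo_eq (series_remS _)).
exact: bounded_ooD (bounded_ooM bk (cvg_oo_bounded (cvg_oo_inv X))) (bounded_oo_cst X _).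
Qed.

Lemma bounded_cf_rem_seriesP n :
  bounded_oo X (cf_rem a b f n) <-> bounded_oo X (series_rem (2 * n)).
Proof.
have bw := bounded_oo_setT X (bounded_cf_approx_trunc n).
split=> h; [have := bounded_ooD h bw | have := bounded_ooB h bw];
  by apply: bounded_oo_eq; apply: near_ooT => z; rewrite /cf_rem /series_rem; ring.
Qed.

Lemma asym_expansion_series_remP :
  asym_expansion X f c <-> forall j, bounded_oo X (series_rem j).
Proof.
split=> h j.
  have /littleo_inv_expP l := h j.
  apply: bounded_oo_eq (bounded_ooD (cvg_oo_bounded l) (bounded_oo_cst X (c j))).
  apply: near_ooW (near_oo_neq0 X) => z z0.
  rewrite -[\sum_(0 <= k < j.+1) _]/(series_trunc j.+1 z) /series_rem series_truncS.
  have x0 : z ^+ j.+1 != 0 by rewrite expf_neq0.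
  by move: x0; move: (series_trunc j z) (f z) (z ^+ j.+1) => s fz x x0; field.
apply/littleo_inv_expP; apply: cvg_oo_eq (cvg_oo0M_bounded (cvg_oo_inv X) (h j.+1)).
apply: near_ooW (near_oo_neq0 X) => z z0.
rewrite -[\sum_(0 <= k < j.+1) _]/(series_trunc j.+1 z) /series_rem (exprS z j.+1).
by move: (series_trunc j.+1 z) (f z) (z ^+ j.+1) => s fz x; field.
Qed.

Lemma asym_expansion_cf_remP :
  asym_expansion X f c <-> forall n, bounded_oo X (cf_rem a b f n).
Proof.
rewrite asym_expansion_series_remP; split=> h n; first exact/bounded_cf_rem_seriesP.
by apply: (@bounded_series_rem_le _ (2 * n)); [rewrite leq_pmull | apply/bounded_cf_rem_seriesP].
Qed.

End SeriesRemainder.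

Section Tails.
Variable R : realType.
Local Notation C := R[i].
Variables a b : nat -> R.
Hypothesis a_neq0 : forall n, (0 < n)%N -> a n != 0.
Local Notation A := (cf_num (fun n => (a n)%:C) (fun n => (b n)%:C)).
Local Notation B := (cf_den (fun n => (a n)%:C) (fun n => (b n)%:C)).
Local Notation w := (cf_approx a b).
Variables (X : set C) (f : C -> C).
Local Notation cf_rem := (cf_rem a b f).

Lemma cf_nest_sub_approx n z u : (B n.+1).[z] != 0 -> (B n.+1).[z] - u * (B n).[z] != 0 ->
  ((A n.+1).[z] - u * (A n).[z]) / ((B n.+1).[z] - u * (B n).[z]) - (A n.+1).[z] / (B n.+1).[z]
  = u * (aprod a n)%:C / ((B n.+1).[z] * ((B n.+1).[z] - u * (B n).[z])).
Proof.
rewrite -(horner_cf_casoratian a b n z); move: (A n.+1).[z] (A n).[z] (B n.+1).[z] (B n).[z].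
by move=> p1 p0 q1 q0 q0' q1'; field; rewrite q0' q1'.
Qed.

Lemma cvg_oo_cf_rem_nest n u : (forall z, X z -> f z = cf_nest a b n z (u z)) ->
  cvg_oo X (fun z => u z * z) (a n.+1)%:C -> cvg_oo X (cf_rem n) (aprod a n.+1)%:C.
Proof.
move=> fu lu.
have u0 : cvg_oo X u 0.
  have := cvg_ooM lu (cvg_oo_inv X); rewrite mulr0; apply: cvg_oo_eq.
  by apply: near_ooW (near_oo_neq0 X) => z z0; rewrite mulfK.
have [r hr] := cf_nest_frac a b n.
have B0 : cvg_oo X (fun z => (B n).[z] / z ^+ n) 0.
  have sB := size_cf_den (fun n => (a n)%:C) (fun n => (b n)%:C) n.
  by have := cvg_oo_horner_div_exp X (leqW sB); rewrite nth_default.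
have e : near_oo X (fun z => u z * z * (aprod a n)%:C * ((B n.+1).[z] / z ^+ n *
    ((B n.+1).[z] / z ^+ n - u z * z * ((B n).[z] / z ^+ n) * z^-1))^-1 = cf_rem n z).
  have uz1 : near_oo X (fun z => normc (u z) <= 1) by apply: near_ooW (u0 1 ltr01) => z; rewrite subr0.
  apply: near_ooW (near_ooI (near_ooI (near_oo_mem X) (near_ooI uz1 (near_oo_gt X r)))
    (near_ooI (near_oo_setT X (near_oo_cf_approx a b n)) (near_oo_neq0 X))).
  move=> z [[Xz [hu hz]] [[q1 wE] z0]]; have [q fE] := hr z (u z) hz hu.
  rewrite /cf_rem wE (fu z Xz) fE cf_nest_sub_approx // (_ : (2 * n).+1 = n + n + 1)%N.
    move: q1 q; move: (B n.+1).[z] (B n).[z] (u z) => q1 q0 v q1' q'.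
    by rewrite !exprD expr1; field; neq0_side.
  by rewrite addn1 addnn mul2n.
have den : cvg_oo X (fun z => (B n.+1).[z] / z ^+ n *
    ((B n.+1).[z] / z ^+ n - u z * z * ((B n).[z] / z ^+ n) * z^-1)) 1.
  have := cvg_ooM (cvg_oo_cf_den a b X n)
    (cvg_ooB (cvg_oo_cf_den a b X n) (cvg_ooM (cvg_ooM lu B0) (cvg_oo_inv X))).
  by rewrite mulr0 subr0 mulr1.
apply: cvg_oo_eq e _.
have := cvg_ooM (cvg_ooM lu (cvg_oo_cst X (aprod a n)%:C)) (cvg_ooV den (oner_neq0 _)).
by rewrite invr1 mulr1 mulrC -rmorphM -aprodS.
Qed.

Fixpoint cf_tail n z := if n is n'.+1 then z + (b n)%:C - (a n)%:C / cf_tail n' z else f z.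

Lemma cf_nest_tail n z : cf_nest a b n z (cf_tail n z) = f z.
Proof.
elim: n => [|n ih] //=; rewrite -[RHS]ih; congr cf_nest.
by rewrite opprB addrC subrK invf_div mulrC divfK ?aC_neq0.
Qed.

Definition cf_resid k z := (A k).[z] - f z * (B k).[z].

Lemma cf_residS k z :
  cf_resid k.+2 z = (z + (b k.+1)%:C) * cf_resid k.+1 z - (a k.+1)%:C * cf_resid k z.
Proof. by rewrite /cf_resid horner_cf_numS horner_cf_denS; ring. Qed.

Lemma cf_tail_resid n z : (forall j, (0 < j <= n)%N -> cf_resid j z != 0) ->
  cf_tail n z = cf_resid n.+1 z / cf_resid n z.
Proof.
elim: n => [|n ih] hD.
  rewrite /cf_resid !unlock /= horner0 hornerN !hornerC.
  by rewrite mulr0 mulr1 subr0 sub0r invrN invr1 mulrN1 opprK.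
rewrite /= ih => [|j /andP[j0 jn]]; last by rewrite hD // j0 leqW.
have D0 : cf_resid n.+1 z != 0 by apply: hD; rewrite /= leqnn.
by rewrite invf_div cf_residS; move: D0; move: (cf_resid n.+1 z) (cf_resid n z) => x y x0; field.
Qed.

Lemma cvg_oo_cf_resid k : cvg_oo X (cf_rem k) (aprod a k.+1)%:C ->
  cvg_oo X (fun z => cf_resid k.+1 z * z ^+ k.+1) (- (aprod a k.+1)%:C).
Proof.
move=> hL; have e : near_oo X (fun z => - ((B k.+1).[z] / z ^+ k * cf_rem k z) =
    cf_resid k.+1 z * z ^+ k.+1).
  apply: near_ooW (near_ooI (near_oo_setT X (near_oo_cf_approx a b k)) (near_oo_neq0 X)).
  move=> z [[q wE] z0]; rewrite /cf_rem /cf_resid wE (_ : (2 * k).+1 = k.+1 + k)%N; last first.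
    by rewrite addSn addnn mul2n.
  have x0 : z ^+ k != 0 by rewrite expf_neq0.
  rewrite exprD; move: q x0; move: (B k.+1).[z] (A k.+1).[z] (f z) (z ^+ k.+1) (z ^+ k).
  by move=> q p fz y x q0 x0; field; neq0_side.
by apply: cvg_oo_eq e _; have := cvg_ooN (cvg_ooM (cvg_oo_cf_den a b X k) hL); rewrite mul1r.
Qed.

Lemma near_oo_cf_resid_neq0 n : (forall k, cvg_oo X (cf_rem k) (aprod a k.+1)%:C) ->
  near_oo X (fun z => forall j, (0 < j <= n)%N -> cf_resid j z != 0).
Proof.
move=> hL; elim: n => [|n ih]; first by apply: near_ooT => z [|j].
have nz : near_oo X (fun z => cf_resid n.+1 z != 0).
  have /cvg_oo_neq0 := cvg_oo_cf_resid (hL n); rewrite oppr_eq0 aprodC_neq0 // => /(_ isT).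
  by apply: near_ooW => z; rewrite mulf_eq0 negb_or => /andP[].
apply: near_ooW (near_ooI ih nz) => z [h1 h2] j /andP[j0].
by rewrite leq_eqVlt ltnS => /orP[/eqP -> // | jn]; rewrite h1 // j0.
Qed.

Lemma cf_tails_cf_remP :
  (forall n, (0 < n)%N -> exists fn : R[i] -> R[i],
     (forall z, X z -> f z = cf_nest a b n z (fn z)) /\
     asym_equiv X fn (fun z => (a n.+1)%:C / z))
  <-> forall n, bounded_oo X (cf_rem n).
Proof.
have expr1E g : (fun z : C => g z * z ^+ 1) = (fun z => g z * z).
  by apply: funext => z; rewrite expr1.
split=> [h | hB].
  suff hS k : bounded_oo X (cf_rem k.+1).
    by case=> [|k] //; apply: bounded_cf_rem_le (hS 0%N).
  have [fn [fE /(asym_equiv_expP X fn 1 (aC_neq0 a_neq0 k.+1))]] := h k.+1 isT.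
  by rewrite expr1E => /(cvg_oo_cf_rem_nest fE) /cvg_oo_bounded.
have hL k := cvg_oo_cf_rem (hB k.+1).
case=> [//|k] _; exists (cf_tail k.+1); split=> [z _|]; first by rewrite cf_nest_tail.
apply/(asym_equiv_expP X _ 1 (aC_neq0 a_neq0 k.+1)); rewrite expr1E.
have e : near_oo X (fun z => cf_resid k.+2 z * z ^+ k.+2 * (cf_resid k.+1 z * z ^+ k.+1)^-1
    = cf_tail k.+1 z * z).
  apply: near_ooW (near_ooI (near_oo_cf_resid_neq0 k.+1 hL) (near_oo_neq0 X)) => z [hz z0].
  have D0 : cf_resid k.+1 z != 0 by apply: hz; rewrite /= leqnn.
  rewrite (cf_tail_resid hz) (exprS z k.+1); have x0 : z ^+ k.+1 != 0 by rewrite expf_neq0.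
  move: D0 x0; move: (cf_resid k.+2 z) (cf_resid k.+1 z) (z ^+ k.+1) => x y t y0 t0.
  by field; neq0_side.
apply: cvg_oo_eq e _.
have := cvg_ooM (cvg_oo_cf_resid (hL k.+1)) (cvg_ooV (cvg_oo_cf_resid (hL k)) _).
rewrite oppr_eq0 aprodC_neq0 // => /(_ isT).
by rewrite invrN mulrNN aprodS rmorphM mulrAC mulfV ?aprodC_neq0 ?mul1r.
Qed.

End Tails.

Section BestApproximation.
Variable R : realType.
Local Notation C := R[i].
Variables a b : nat -> R.
Hypothesis a_neq0 : forall n, (0 < n)%N -> a n != 0.
Local Notation A := (cf_num (fun n => (a n)%:C) (fun n => (b n)%:C)).
Local Notation B := (cf_den (fun n => (a n)%:C) (fun n => (b n)%:C)).
Local Notation w := (cf_approx a b).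
Variables (X : set C) (f : C -> C).
Hypothesis X_unbounded : unbounded X.
Local Notation cf_rem := (cf_rem a b f).

Lemma cf_approx_ratfun n : is_ratfun_of (w n) (A n.+1) (B n.+1).
Proof.
split; first exact: monic_neq0 (cf_den_monic_size _ _ n).1.
have [rr h] := near_oo_cf_approx a b n; exists rr => z; rewrite ltc_normc => hz.
by have [] := h z I hz.
Qed.

Lemma cf_approx_unique n g h r : bounded_oo X (cf_rem n) -> is_ratfun_of r g h ->
  (size g <= n.+1)%N -> (size h <= n.+1)%N ->
  bigO_at_oo X (fun z => f z - r z) (fun z => (z ^+ (2 * n).+1)^-1) -> eq_near_oo r (w n).
Proof.
move=> hB [h0 [rr hr]] sg sh /bigO_inv_expP hO.
have rE : near_oo setT (fun z => r z = g.[z] / h.[z]).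
  by exists rr => z _ hz; apply: hr; rewrite ltc_normc.
set N := g * B n.+1 - A n.+1 * h.
have NE z : N.[z] = g.[z] * (B n.+1).[z] - (A n.+1).[z] * h.[z] by rewrite /N !hornerE.
suff N0 : N = 0.
  have [r0 H0] := near_ooI (near_ooI rE (near_oo_horner_neq0 setT h0)) (near_oo_cf_approx a b n).
  exists r0 => z; rewrite ltc_normc => hz; have [[-> hz0] [q ->]] := H0 z I hz.
  by apply/eqP; rewrite eqr_div // -subr_eq0 -NE N0 horner0.
apply: (horner_cvg_oo0_eq0 X_unbounded).
have e : near_oo X (fun z => (cf_rem n z - (f z - r z) * z ^+ (2 * n).+1) *
    (h.[z] / z ^+ n) * ((B n.+1).[z] / z ^+ n) * z^-1 = N.[z]).
  apply: near_ooW (near_ooI (near_ooI (near_oo_setT X rE) (near_oo_setT X (near_oo_horner_neq0 setT h0)))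
    (near_ooI (near_oo_setT X (near_oo_cf_approx a b n)) (near_oo_neq0 X))).
  move=> z [[-> hz] [[q wE] z0]]; rewrite NE /cf_rem wE.
  rewrite (_ : (2 * n).+1 = (n + n).+1)%N; last by rewrite addnn mul2n.
  have x0 : z ^+ n != 0 by rewrite expf_neq0.
  rewrite exprS exprD; move: hz q x0; move: h.[z] g.[z] (B n.+1).[z] (A n.+1).[z] (f z) (z ^+ n).
  by move=> hz gz q p fz x hz0 q0 x0; field; neq0_side.
apply: cvg_oo_eq e _; apply: bounded_cvg_oo0M (cvg_oo_inv X).
apply: bounded_ooM (cvg_oo_bounded (cvg_oo_cf_den a b X n)).
exact: bounded_ooM (bounded_ooB hB hO) (cvg_oo_bounded (cvg_oo_horner_div_exp X sh)).
Qed.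

Lemma cf_approx_best_cf_remP :
  (forall n, [/\ ratfun_deg_le n (w n),
      bigO_at_oo X (fun z => f z - w n z) (fun z => (z ^+ (2 * n).+1)^-1)
    & forall r, ratfun_deg_le n r ->
        bigO_at_oo X (fun z => f z - r z) (fun z => (z ^+ (2 * n).+1)^-1) ->
        eq_near_oo r (w n)])
  <-> forall n, bounded_oo X (cf_rem n).
Proof.
split=> h n; first by case: (h n) => _ /bigO_inv_expP.
split; last by move=> r [g [k [rk [_ [sg sk]]]]]; apply: cf_approx_unique (h n) rk sg sk.
  exists (A n.+1), (B n.+1); split; first exact: cf_approx_ratfun.
  split; first exact: coprimep_cf_num_den.
  by rewrite (cf_den_monic_size _ _ n).2 leqnn (leq_trans (size_cf_num _ _ n)).
by apply/bigO_inv_expP; apply: h.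
Qed.

Lemma pade_cf_remP :
  (forall n, (0 < n)%N -> pade_approx X f n (w n) /\
     forall r, pade_approx X f n r -> eq_near_oo r (w n))
  <-> forall n, bounded_oo X (cf_rem n).
Proof.
split=> [h n | h [//|n] _].
  apply: (@bounded_cf_rem_le _ _ _ _ _ n n.+1) => //.
  by have [[_ /bigO_inv_expP]] := h n.+1 isT.
split; last by move=> r [[g [k [rk [sg sk]]]] hO]; apply: cf_approx_unique (h n.+1) rk (leqW sg) sk hO.
split; last by apply/bigO_inv_expP; apply: h.
exists (A n.+2), (B n.+2); split; first exact: cf_approx_ratfun.
by rewrite size_cf_num (cf_den_monic_size _ _ _).2.
Qed.

End BestApproximation.

Section ComplexIntegral.
Variable R : realType.
Local Notation C := R[i].
Variable mu : {measure set R -> \bar R}.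
Local Notation rintegrable f := (mu.-integrable setT (EFin \o f)).
Local Notation RI f := (Rintegral mu setT f).
Implicit Types (f g : R -> R) (h : R -> C).

Lemma rintegrableZ k f : rintegrable f -> rintegrable (fun t => k * f t).
Proof. by move=> /(integrableZl measurableT k); apply: eq_integrable. Qed.

Lemma rintegrableD f g : rintegrable f -> rintegrable g -> rintegrable (fun t => f t + g t).
Proof. exact: integrableD. Qed.

Lemma rintegrableB f g : rintegrable f -> rintegrable g -> rintegrable (fun t => f t - g t).
Proof. exact: integrableB. Qed.

Lemma rintegrable_le f g : measurable_fun setT f -> rintegrable g ->
  (forall t, `|f t| <= g t) -> rintegrable f.
Proof.
move=> mf ig fg; apply: le_integrable ig => //; first exact/measurable_realfun.measurable_EFinP.
by move=> t _ /=; rewrite ?abse_EFin lee_fin (ger0_norm (le_trans (normr_ge0 _) (fg t))).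
Qed.

Definition cintegral h := Complex (RI (fun t => complex.Re (h t))) (RI (fun t => complex.Im (h t))).

Definition cintegrable h :=
  rintegrable (fun t => complex.Re (h t)) /\ rintegrable (fun t => complex.Im (h t)).

Lemma cintegralD h1 h2 : cintegrable h1 -> cintegrable h2 ->
  cintegral (fun t => h1 t + h2 t) = cintegral h1 + cintegral h2.
Proof.
move=> [r1 i1] [r2 i2]; rewrite /cintegral.
have -> : (fun t => complex.Re (h1 t + h2 t)) = (fun t => complex.Re (h1 t) + complex.Re (h2 t)).
  by apply: funext => t; case: (h1 t) (h2 t) => ? ? [].
have -> : (fun t => complex.Im (h1 t + h2 t)) = (fun t => complex.Im (h1 t) + complex.Im (h2 t)).
  by apply: funext => t; case: (h1 t) (h2 t) => ? ? [].
by rewrite !RintegralD.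
Qed.

Lemma cintegralZ c h : cintegrable h -> cintegral (fun t => c * h t) = c * cintegral h.
Proof.
move=> [r1 i1]; rewrite /cintegral; case: c => cr ci.
have -> : (fun t => complex.Re ((cr +i* ci) * h t)) =
    (fun t => cr * complex.Re (h t) - ci * complex.Im (h t)) by apply: funext => t; case: (h t).
have -> : (fun t => complex.Im ((cr +i* ci) * h t)) =
    (fun t => cr * complex.Im (h t) + ci * complex.Re (h t)) by apply: funext => t; case: (h t).
by rewrite RintegralB ?RintegralD ?RintegralZl //; apply: rintegrableZ.
Qed.

Lemma cintegrableZ c h : cintegrable h -> cintegrable (fun t => c * h t).
Proof.
move=> [r1 i1]; case: c => cr ci; split.
  by apply: (eq_integrable measurableT _ _ _ (rintegrableB (rintegrableZ cr r1) (rintegrableZ ci i1))) => t _ /=; case: (h t).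
by apply: (eq_integrable measurableT _ _ _ (rintegrableD (rintegrableZ cr i1) (rintegrableZ ci r1))) => t _ /=; case: (h t).
Qed.

Lemma cintegral_real f : cintegral (fun t => (f t)%:C) = (RI f)%:C.
Proof. by rewrite /cintegral /= Rintegral_cst // mul0r. Qed.

Lemma cintegrable_real f : rintegrable f -> cintegrable (fun t => (f t)%:C).
Proof.
move=> fi; split => //=; apply: (eq_integrable measurableT _ _ _ (rintegrableZ 0 fi)) => t _ /=.
by rewrite mul0r.
Qed.

Lemma normc_le_ReIm (x : C) : normc x <= `|complex.Re x| + `|complex.Im x|.
Proof.
rewrite {1}[x]complexE; apply: le_trans (le_normcD _ _) _.
by rewrite normcM !normc_real /normc /= expr0n expr1n add0r sqrtr1 mul1r.
Qed.

Lemma normc_cintegral_le h : cintegrable h ->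
  normc (cintegral h) <= RI (fun t => `|complex.Re (h t)|) + RI (fun t => `|complex.Im (h t)|).
Proof. by move=> [r1 i1]; apply: le_trans (normc_le_ReIm _) (lerD _ _); apply: le_normr_Rintegral. Qed.

End ComplexIntegral.

Import numFieldTopology.Exports.

Section StieltjesExpansion.
Variable R : realType.
Local Notation C := R[i].
Variable mu : {measure set R -> \bar R}.
Hypothesis moment_integrable : forall k, mu.-integrable setT (fun t : R => (t ^+ k)%:E).
Local Notation rintegrable f := (mu.-integrable setT (EFin \o f)).
Local Notation RI f := (Rintegral mu setT f).

Definition stieltjes_kernel (z : C) j (t : R) : C := t%:C ^+ j / (z - t%:C).

Lemma Re_stieltjes_kernel z j t : complex.Re (stieltjes_kernel z j t) = t ^+ j *
  ((complex.Re z - t) / ((complex.Re z - t) * (complex.Re z - t) + complex.Im z * complex.Im z)).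
Proof. by case: z => x y; rewrite /stieltjes_kernel -rmorphXn /= subr0 mul0r subr0 !expr2. Qed.

Lemma Im_stieltjes_kernel z j t : complex.Im (stieltjes_kernel z j t) = t ^+ j *
  (- complex.Im z / ((complex.Re z - t) * (complex.Re z - t) + complex.Im z * complex.Im z)).
Proof. by case: z => x y; rewrite /stieltjes_kernel -rmorphXn /= subr0 mul0r addr0 !expr2 mulNr. Qed.

Lemma continuous_kernel_part (x y : R) (g : R -> R) j : y != 0 -> continuous g ->
  continuous (fun t : R => t ^+ j * (g t / ((x - t) * (x - t) + y * y))).
Proof.
move=> y0 cg t; have den0 : (x - t) * (x - t) + y * y != 0.
  have h1 : 0 < y * y by rewrite -expr2 exprn_even_gt0.
  by rewrite gt_eqF // ltr_wpDl // -expr2 sqr_ge0.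
have cxt : (fun s : R => x - s) @ t --> x - t by apply: cvgB; [exact: cvg_cst | exact: cvg_id].
apply: cvgM; first exact: exprn_continuous.
apply: cvgM; first exact: cg.
by apply: cvgV => //; apply: cvgD; [exact: cvgM | exact: cvg_cst].
Qed.

Lemma normc_stieltjes_kernel_le z j t : complex.Im z != 0 ->
  normc (stieltjes_kernel z j t) <= `|t| ^+ j * `|complex.Im z|^-1.
Proof.
move=> y0; rewrite normcM normcV normcX normc_real ler_wpM2l ?exprn_ge0 //.
have hy : 0 < `|complex.Im z| by rewrite normr_gt0.
have hb : `|complex.Im z| <= normc (z - t%:C).
  by move: (Im_le_normc (z - t%:C)); case: z y0 hy => x y /=; rewrite subr0.
by rewrite lef_pV2 ?posrE // (lt_le_trans hy hb).
Qed.

Lemma rintegrable_abs_moment k : rintegrable (fun t => `|t| ^+ k).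
Proof.
by apply: (eq_integrable measurableT _ _ _ (integrable_norm (moment_integrable k))) => t _ /=;
  rewrite normrX.
Qed.

Lemma cintegrable_stieltjes_kernel z j : complex.Im z != 0 -> cintegrable mu (stieltjes_kernel z j).
Proof.
move=> y0; have hb t := normc_stieltjes_kernel_le j t y0.
have ig : rintegrable (fun t => `|t| ^+ j * `|complex.Im z|^-1).
  apply: (eq_integrable measurableT _ _ _ (rintegrableZ (`|complex.Im z|^-1)
    (rintegrable_abs_moment j))) => t _ /=.
  by rewrite mulrC.
split.
- apply: (rintegrable_le _ ig) => [|t]; last exact: le_trans (Re_le_normc _) (hb t).
  rewrite (funext (Re_stieltjes_kernel z j)).
  apply: measurable_realfun.continuous_measurable_fun; apply: continuous_kernel_part => //.
  by move=> t; apply: cvgB; [exact: cvg_cst | exact: cvg_id].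
- apply: (rintegrable_le _ ig) => [|t]; last exact: le_trans (Im_le_normc _) (hb t).
  rewrite (funext (Im_stieltjes_kernel z j)).
  apply: measurable_realfun.continuous_measurable_fun; apply: continuous_kernel_part => //.
  by move=> t; exact: cvg_cst.
Qed.

Lemma cintegral_stieltjes_kernelS z j : z != 0 -> complex.Im z != 0 ->
  cintegral mu (stieltjes_kernel z j) =
  z^-1 * (RI (fun t => t ^+ j))%:C + z^-1 * cintegral mu (stieltjes_kernel z j.+1).
Proof.
move=> z0 y0.
have -> : stieltjes_kernel z j = fun t : R => z^-1 * (t ^+ j)%:C + z^-1 * stieltjes_kernel z j.+1 t.
  apply: funext => t; have zt : z - t%:C != 0.
    by apply: contraNneq y0; case: z z0 => x y _ /eqP; rewrite eq_complex /= subr0 => /andP[].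
  rewrite /stieltjes_kernel exprS rmorphXn /=; move: zt; move: t%:C (t%:C ^+ j) => s v zt.
  by field; neq0_side.
have ij := cintegrable_real (moment_integrable j).
rewrite cintegralD ?cintegralZ ?cintegral_real //; first exact: cintegrable_stieltjes_kernel.
- exact: cintegrableZ.
- exact/cintegrableZ/cintegrable_stieltjes_kernel.
Qed.

Lemma stieltjes_expansion z j : z != 0 -> complex.Im z != 0 ->
  stieltjes mu z = series_trunc (fun k => (moment mu k)%:C) j z
                   + cintegral mu (stieltjes_kernel z j) / z ^+ j.
Proof.
move=> z0 y0; elim: j => [|j ih].
  rewrite /series_trunc big_geq // add0r expr0 divr1.
  by congr cintegral; apply: funext => t; rewrite /stieltjes_kernel expr0 mul1r.
rewrite ih series_truncS (cintegral_stieltjes_kernelS j z0 y0) (exprS z j).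
have zj : z ^+ j != 0 by rewrite expf_neq0.
move: zj; move: (series_trunc _ j z) (z ^+ j) (cintegral mu (stieltjes_kernel z j.+1)).
by move=> s x c x0; rewrite /moment /Rintegral; field; neq0_side.
Qed.

Lemma normc_cintegral_stieltjes_kernel_le z j : complex.Im z != 0 ->
  normc (cintegral mu (stieltjes_kernel z j)) <= 2 * (RI (fun t => `|t| ^+ j) * `|complex.Im z|^-1).
Proof.
move=> y0; have [cr ci] := cintegrable_stieltjes_kernel j y0.
have ig : rintegrable (fun t => `|t| ^+ j * `|complex.Im z|^-1).
  by apply: (eq_integrable measurableT _ _ _ (rintegrableZ (`|complex.Im z|^-1)
    (rintegrable_abs_moment j))) => t _ /=; rewrite mulrC.
apply: le_trans (normc_cintegral_le (cintegrable_stieltjes_kernel j y0)) _.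
rewrite -RintegralZr //; last exact: rintegrable_abs_moment.
rewrite mulr2n mulrDl mul1r; apply: lerD; apply: le_Rintegral => //; try exact: integrable_norm.
  by move=> t _; apply: le_trans (Re_le_normc _) (normc_stieltjes_kernel_le j t y0).
by move=> t _; apply: le_trans (Im_le_normc _) (normc_stieltjes_kernel_le j t y0).
Qed.

End StieltjesExpansion.

Section Sector.
Variable R : realType.
Local Notation C := R[i].

Lemma ler_sin : {in `[(- (pi / 2)), pi / 2] &, {mono (@sin R) : x y / x <= y}}.
Proof. exact/le_mono_in/monoW_in/ltr_sin. Qed.

Lemma sin_mul_le (de ep u : R) : 0 < de -> 0 < ep -> de <= u <= pi - ep ->
  sin de * sin ep <= sin u.
Proof.
move=> d0 e0 /andP[du up]; have pi0 : 0 < pi :> R := pi_gt0 R.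
have sd1 := sin_le1 de; have se1 := sin_le1 ep.
have sd0 : 0 <= sin de by apply: sin_ge0_pi; apply/andP; split; lra.
have se0 : 0 <= sin ep by apply: sin_ge0_pi; apply/andP; split; lra.
have inI x : 0 <= x <= pi / 2 -> x \in `[(- (pi / 2)), pi / 2].
  by move=> /andP[x0 x1]; rewrite in_itv /=; apply/andP; split; lra.
have [hu|hu] := lerP u (pi / 2).
  have : sin de <= sin u by rewrite ler_sin //; apply: inI; apply/andP; split; lra.
  by nra.
have -> : sin u = sin (pi - u) by rewrite sinB sinpi cospi mul0r sub0r mulN1r opprK.
have : sin ep <= sin (pi - u).
  by rewrite ler_sin; [lra | |]; apply: inI; apply/andP; split; lra.
by nra.
Qed.

Lemma sector_Im_ge (de ep : R) (z : C) : 0 < de -> 0 < ep -> sector de ep z ->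
  0 < sin de * sin ep /\ sin de * sin ep * normc z <= `|complex.Im z|.
Proof.
move=> d0 e0 [z0 [th [/andP[th1 th2] zE /andP[hd he]]]]; have pi0 : 0 < pi :> R := pi_gt0 R.
have na := normr_ge0 th.
have ImE : complex.Im z = normc z * sin th by rewrite {1}zE /= mul0r addr0.
have sin_abs : `|sin th| = sin `|th|.
  have [t0|t0] := leP 0 th.
    by rewrite (ger0_norm t0) ger0_norm //; apply: sin_ge0_pi; apply/andP; split; lra.
  rewrite (ltr0_norm t0) sinN ltr0_norm // -oppr_gt0 -sinN.
  by apply: sin_gt0_pi; apply/andP; split; lra.
have sd : 0 < sin de by apply: sin_gt0_pi; apply/andP; split; lra.
have se : 0 < sin ep by apply: sin_gt0_pi; apply/andP; split; lra.
split; first exact: mulr_gt0.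
rewrite ImE normrM (ger0_norm (normc_ge0 z)) sin_abs mulrC ler_wpM2l ?normc_ge0 //.
by apply: sin_mul_le => //; apply/andP.
Qed.

End Sector.

Lemma stieltjes_asym_expansion (R : realType) (mu : {measure set R -> \bar R})
  (moment_integrable : forall k, mu.-integrable setT (fun t : R => (t ^+ k)%:E))
  (de ep : R) : 0 < de -> 0 < ep ->
  asym_expansion (sector de ep) (stieltjes mu) (fun k => (moment mu k)%:C).
Proof.
move=> d0 e0 n; apply/littleo_inv_expP.
set c := sin de * sin ep; set M := Rintegral mu setT (fun t => `|t| ^+ n.+1).
apply: (@cvg_oo0_normc_le_inv _ _ _ (2 * (M * c^-1))); exists 0 => z zS z_gt0.
have [c0 hc] := sector_Im_ge d0 e0 zS.
have z0 : z != 0 by rewrite -normc_gt0.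
have y_gt0 : 0 < `|complex.Im z| by apply: lt_le_trans hc; rewrite mulr_gt0.
have y0 : complex.Im z != 0 by rewrite -normr_gt0.
rewrite (stieltjes_expansion moment_integrable n.+1 z0 y0).
rewrite -[\sum_(0 <= k < n.+1) _]/(series_trunc _ n.+1 z) addrAC subrr add0r divfK ?expf_neq0 //.
apply: le_trans (normc_cintegral_stieltjes_kernel_le moment_integrable n.+1 y0) _.
have M0 : 0 <= M by apply: Rintegral_ge0 => t _; rewrite exprn_ge0.
rewrite -mulrA ler_wpM2l // -mulrA ler_wpM2l // -invfM lef_pV2 ?posrE //.
by rewrite mulr_gt0 // normc_gt0.
Qed.

Unset Implicit Arguments.

Theorem theorem4p6 (R : realType) (mu : {measure set R -> \bar R})
  (a b : nat -> R)
  (Hsupp : infinite_set (msupport mu))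
  (Hmom : forall k : nat, mu.-integrable setT (fun t : R => (t ^+ k)%:E))
  (Ha : forall n : nat, (0 < n)%N -> 0 < a n)
  (Hw : forall n : nat, (0 < n)%N ->
     littleo_at_oo setT
       (fun z : R[i] => cf_approx a b n z
          - \sum_(0 <= k < (2 * n)%N) (moment mu k)%:C / z ^+ k.+1)
       (fun z : R[i] => (z ^+ (2 * n))^-1)) :
  (forall (X : set R[i]) (f : R[i] -> R[i]), unbounded X ->
   [<->
     (* (i) *)
     asym_expansion X f (fun k => (moment mu k)%:C);
     (* (ii) *)
     cf_asymp X f (cf_approx a b);
     (* (iii) *)
     (forall n : nat, (0 < n)%N -> exists fn : R[i] -> R[i],
        (forall z, X z -> f z = cf_nest a b n z (fn z)) /\
        asym_equiv X fn (fun z => (a n.+1)%:C / z));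
     (* (iv) *)
     (forall n : nat,
        asym_equiv X (fun z => f z - cf_approx a b n z)
          (fun z => (\prod_(1 <= i < n.+2) a i)%:C / z ^+ (2 * n).+1));
     (* (v) *)
     (forall n : nat,
        bigO_at_oo X (fun z => f z - cf_approx a b n z)
          (fun z => (z ^+ (2 * n).+1)^-1));
     (* (vi) *)
     (forall N : nat, exists2 n : nat, (N <= n)%N &
        bigO_at_oo X (fun z => f z - cf_approx a b n z)
          (fun z => (z ^+ (2 * n).+1)^-1));
     (* (vii) *)
     (forall n : nat,
        [/\ ratfun_deg_le n (cf_approx a b n),
            bigO_at_oo X (fun z => f z - cf_approx a b n z)
              (fun z => (z ^+ (2 * n).+1)^-1)
          & forall r : R[i] -> R[i], ratfun_deg_le n r ->
              bigO_at_oo X (fun z => f z - r z)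
                (fun z => (z ^+ (2 * n).+1)^-1) ->
              eq_near_oo r (cf_approx a b n)]);
     (* (viii) *)
     (forall n : nat, (0 < n)%N ->
        pade_approx X f n (cf_approx a b n) /\
        forall r : R[i] -> R[i], pade_approx X f n r ->
          eq_near_oo r (cf_approx a b n))
   ]) /\
  (forall delta eps : R, 0 < delta -> 0 < eps ->
     cf_asymp (sector delta eps) (stieltjes mu) (cf_approx a b)).
Proof.
have a_neq0 n : (0 < n)%N -> a n != 0 by move/Ha/lt0r_neq0.
have expansionP X f := asym_expansion_cf_remP (c := fun k => (moment mu k)%:C) Hw X f.
split=> [X f X_unbounded | de ep d0 e0]; last first.
  by apply/(cf_asymp_cf_remP b a_neq0)/expansionP/stieltjes_asym_expansion.
have expP := expansionP X f.
have asympP := cf_asymp_cf_remP b a_neq0 X f.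
have tailsP := cf_tails_cf_remP b a_neq0 X f.
have equivP := asym_equiv_cf_remP b a_neq0 X f.
have bigOP := bigO_cf_remP a b X f.
have cofinalP := bigO_cofinal_cf_remP a b X f.
have bestP := cf_approx_best_cf_remP b a_neq0 f X_unbounded.
have padeP := pade_cf_remP a b f X_unbounded.
tfae.
- by move/expP/asympP.
- by move/asympP/tailsP.
- by move/tailsP/equivP.
- by move/equivP/bigOP.
- by move/bigOP/cofinalP.
- by move/cofinalP/bestP.
- by move/bestP/padeP.
- by move/padeP/expP.
Qed.
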